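(* Let $p\ge 1$, let $g_2,g_4,\dots,g_{2p}$ be real numbers with $g_{2p}>0$, let $Q(x)=\sum_{j=1}^{p} g_{2j}x^{2j}$ and let $N>0$. Let $P_n(x)=x^n+\cdots$ ($n\ge 0$) be the monic orthogonal polynomials with respect to the weight $e^{-NQ(x)}$ on $\mathbb{R}$, i.e. $\int_{-\infty}^{\infty}P_k(x)P_l(x)e^{-NQ(x)}\,dx=\delta_{kl}h_k$ with $h_k>0$, and set $P_{-1}=0$. They satisfy $xP_n(x)=P_{n+1}(x)+r_nP_{n-1}(x)$ for $n\ge 0$, with $r_0=0$. For $n\ge 1$ and $j\ge 1$ put $(L^{j})_{n,n-1}=h_{n-1}^{-1}\int_{-\infty}^{\infty}x^{j}P_n(x)P_{n-1}(x)e^{-NQ(x)}\,dx$, and define the formal power series in $\lambda^{-1}$ $$U_n(\lambda)=1+2\sum_{k\ge 1}(L^{2k-1})_{n,n-1}\lambda^{-k}\quad(n\ge 1),\qquad U_0(\lambda)=1.$$ Then for every $n\ge 1$, as formal Laurent series in $\lambda^{-1}$, $$\lambda\,(U_{n+1}-U_n)=r_{n+1}(U_{n+2}+U_{n+1})-r_n(U_n+U_{n-1})$$ and $$r_n\,(U_n+U_{n-1})(U_n+U_{n+1})=\lambda\,(U_n^2-1).$$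
   Context: The recurrence coefficients $r_n$ (depending on $N$) are those of the three-term recurrence of the monic orthogonal polynomials; because $Q$ is even, no diagonal term $s_nP_n$ appears. $(L^j)_{n,n-1}$ is the $(n,n-1)$ matrix element of the $j$-th power of the Jacobi (Lax) operator $LP_n=P_{n+1}+r_nP_{n-1}$. *)

From HB Require Import structures.
From mathcomp Require Import all_boot all_order all_algebra.
From mathcomp Require Import all_classical all_reals all_analysis.
Set Implicit Arguments. Unset Strict Implicit. Unset Printing Implicit Defensive.
Import Order.TTheory GRing.Theory Num.Theory.
Import numFieldNormedType.Exports.
Local Open Scope classical_set_scope.
Local Open Scope ring_scope.

Section Defs.
Variable R : realType.

Definition Qpot (p : nat) (g : nat -> R) (x : R) : R :=
  \sum_(1 <= j < p.+1) g (2 * j)%N * x ^+ (2 * j).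

Definition weight (p : nat) (g : nat -> R) (N : R) (x : R) : R :=
  expR (- (N * Qpot p g x)).

Definition Lentry (p : nat) (g : nat -> R) (N : R) (P : nat -> {poly R})
  (h : nat -> R) (j n : nat) : R :=
  (h n.-1)^-1 * \int[@lebesgue_measure R]_(x in [set: R])
     (x ^+ j * (P n).[x] * (P n.-1).[x] * weight p g N x).

(* Formal power series in lambda^{-1}: f k is the coefficient of lambda^{-k}. *)
Definition fps := nat -> R.

Definition Useries (p : nat) (g : nat -> R) (N : R) (P : nat -> {poly R})
  (h : nat -> R) (n : nat) : fps :=
  fun k => if n == 0%N then (if k == 0%N then 1 else 0)
           else if k == 0%N then 1 else 2 * Lentry p g N P h (2 * k).-1 n.

Definition fps_add (f g : fps) : fps := fun k => f k + g k.
Definition fps_sub (f g : fps) : fps := fun k => f k - g k.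
Definition fps_scale (c : R) (f : fps) : fps := fun k => c * f k.
Definition fps_mul (f g : fps) : fps :=
  fun k => \sum_(i < k.+1) f i * g (k - i)%N.
Definition fps_one : fps := fun k => if k == 0%N then 1 else 0.

(* Formal Laurent series in lambda^{-1}: F i is the coefficient of lambda^i
   (i : int); power series embed with nonpositive exponents. *)
Definition laurent := int -> R.
Definition toL (f : fps) : laurent :=
  fun i => if (i <= 0)%R then f `|i|%N else 0.
Definition lamL (F : laurent) : laurent := fun i => F (i - 1)%R.

End Defs.

From HB Require Import structures.
From mathcomp Require Import all_boot all_order all_algebra.
From mathcomp Require Import all_classical all_reals all_analysis.
From mathcomp Require Import measurable_realfun.
From mathcomp Require Import ring lra zify.
Set Implicit Arguments.
Unset Strict Implicit.
Unset Printing Implicit Defensive.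
Import Order.TTheory GRing.Theory Num.Theory.
Import numFieldNormedType.Exports.
Local Open Scope classical_set_scope.
Local Open Scope ring_scope.

(* Expanding x^j P_n = sum_m (L^j)_{n,m} P_m, orthogonality turns the moments
   int x^j P_a P_b e^{-NQ} into (L^j)_{a,b} h_b.  Their symmetry in a, b gives
   h_{m+1} = r_{m+1} h_m and (L^j)_{m+1,m} = r_{m+1} (L^j)_{m,m+1}, hence
   U_n = 1 + 2 lambda^-1 a_n and U_{n+1} + U_n = 2 d_n, where a_n and d_n are the
   generating series of (L^{2k+1})_{n,n-1} and (L^{2k})_{n,n}.  Reading
   L^{2k+1} = L^{2k} L = L L^{2k} at the entries (n+1,n) and (n,n-1) gives
   r_{n+1} d_{n+1} - r_n d_{n-1} = a_{n+1} - a_n, the first identity; telescoping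
   it in n gives r_n d_n d_{n-1} = a_n (1 + lambda^-1 a_n), the second. *)

Lemma Rintegral_sum d (T : measurableType d) (R : realType)
    (mu : {measure set T -> \bar R}) (D : set T) (I : Type) (s : seq I)
    (F : I -> T -> R) :
  measurable D -> (forall i, mu.-integrable D (EFin \o F i)) ->
  \int[mu]_(x in D) (\sum_(i <- s) F i x) = \sum_(i <- s) \int[mu]_(x in D) F i x.
Proof.
move=> mD intF; elim: s => [|i s IH].
  under eq_Rintegral do rewrite big_nil.
  by rewrite big_nil /Rintegral integral0.
have intS : mu.-integrable D (EFin \o (fun x => \sum_(j <- s) F j x)).
  have -> : EFin \o (fun x => \sum_(j <- s) F j x) = fun x => (\sum_(j <- s) (F j x)%:E)%E.
    by apply/funext => x; rewrite /= sumEFin.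
  by apply: (integrable_sum mD) => j _; exact: intF.
rewrite big_cons -IH -RintegralD //.
by apply: eq_Rintegral => x _; rewrite big_cons.
Qed.

Section Weight.
Variables (R : realType) (p : nat) (g : nat -> R) (N : R).

Lemma measurable_weight : measurable_fun setT (weight p g N).
Proof.
pose q : {poly R} := \sum_(1 <= j < p.+1) g (2 * j)%N *: 'X^(2 * j).
have -> : weight p g N = expR \o horner (- (N *: q)).
  apply/funext => x; rewrite /weight /Qpot /= hornerN hornerZ horner_sum.
  by congr (expR (- (N * _))); apply: eq_bigr => j _; rewrite hornerZ hornerXn.
apply: measurableT_comp; first exact: measurable_expR.
by apply: continuous_measurable_fun; exact: continuous_horner.
Qed.

Lemma weight_ge0 x : 0 <= weight p g N x.
Proof. exact/ltW/expR_gt0. Qed.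

End Weight.

Section Orthogonality.
Variables (R : realType) (p : nat) (g : nat -> R) (N : R) (P : nat -> {poly R}) (h : nat -> R).
Notation mu := (@lebesgue_measure R).
Notation w := (weight p g N).
Hypothesis orthP : forall k l,
  (\int[mu]_(x in [set: R]) ((P k).[x] * (P l).[x] * w x)%:E)%E
  = (if k == l then h k else 0)%:E.

Lemma measurable_orth_integrand k l :
  measurable_fun setT (fun x => (P k).[x] * (P l).[x] * w x).
Proof.
apply: measurable_funM; last exact: measurable_weight.
by apply: measurable_funM; apply: continuous_measurable_fun; exact: continuous_horner.
Qed.

Lemma integrable_orth_integrand k l :
  mu.-integrable setT (EFin \o (fun x => (P k).[x] * (P l).[x] * w x)).
Proof.
have mF m n := measurable_orth_integrand m n.
have sq_ge0 m x : 0 <= (P m).[x] * (P m).[x] * w x.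
  by rewrite mulr_ge0 ?weight_ge0 // -expr2 sqr_ge0.
have int_sq m : mu.-integrable setT (EFin \o (fun x => (P m).[x] * (P m).[x] * w x)).
  apply/integrableP; split; first by apply/measurable_EFinP; exact: mF.
  under eq_integral do rewrite /= ger0_norm ?sq_ge0 //.
  by rewrite orthP eqxx ltry.
have amgm (a b c : R) : 0 <= c -> `|a * b * c| <= a * a * c + b * b * c.
  move=> c0; rewrite !normrM (ger0_norm c0) -mulrDl ler_wpM2r //.
  have := sqr_ge0 (`|a| - `|b|); rewrite sqrrB -!expr2 !real_normK ?num_real //.
  have := normr_ge0 a; have := normr_ge0 b; nra.
apply: (le_integrable measurableT _ _ (integrableD measurableT (int_sq k) (int_sq l))).
  by apply/measurable_EFinP; exact: mF.
move=> x _ /=; rewrite lee_fin [X in _ <= X]ger0_norm ?addr_ge0 ?sq_ge0 //.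
by apply: amgm; exact: weight_ge0.
Qed.

End Orthogonality.

Section JacobiPowers.
Variables (R : realType) (r : nat -> R).

(* [jacobi_pow j n m] is the entry [(L^j)_{n,m}] of the j-th power of the Jacobi
   operator [L P_n = P_{n+1} + r_n P_{n-1}], i.e. the coefficient of [P_m] in [x^j P_n]. *)
Fixpoint jacobi_pow (j n m : nat) : R :=
  if j is j'.+1 then jacobi_pow j' n.+1 m + r n * jacobi_pow j' n.-1 m
  else (n == m)%:R.

Lemma jacobi_pow0 n m : jacobi_pow 0 n m = (n == m)%:R.
Proof. by []. Qed.

Lemma jacobi_powS j n m :
  jacobi_pow j.+1 n m = jacobi_pow j n.+1 m + r n * jacobi_pow j n.-1 m.
Proof. by []. Qed.

Hypothesis r0 : r 0%N = 0.

(* [L^{j+1} = L^j L]: the column recursion. *)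
Lemma jacobi_powSr j n m :
  jacobi_pow j.+1 n m =
  (if m is m'.+1 then jacobi_pow j n m' else 0) + r m.+1 * jacobi_pow j n m.+1.
Proof.
elim: j n m => [|j IH] n m.
  rewrite jacobi_powS !jacobi_pow0.
  case: n m => [|[|n]] [|m] /=; rewrite ?r0 ?eqSS ?mulr0 ?mul0r ?addr0 ?add0r //.
  by have [->|] := eqVneq n m; rewrite ?mulr0.
by rewrite jacobi_powS (IH n.+1) (IH n.-1); case: m => [|m]; rewrite ?jacobi_powS; ring.
Qed.

End JacobiPowers.
Arguments jacobi_pow : simpl never.

Section Moments.
Variables (R : realType) (p : nat) (g : nat -> R) (N : R).
Variables (P : nat -> {poly R}) (h r : nat -> R).
Notation mu := (@lebesgue_measure R).
Notation w := (weight p g N).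
Hypothesis orthP : forall k l,
  (\int[mu]_(x in [set: R]) ((P k).[x] * (P l).[x] * w x)%:E)%E
  = (if k == l then h k else 0)%:E.
Hypothesis recP : forall n, 'X * P n = P n.+1 + r n *: P n.-1.

Lemma mulXn_P j n B : (n + j < B)%N ->
  'X^j * P n = \sum_(m < B) jacobi_pow r j n m *: P m.
Proof.
elim: j n => [|j IH] n ltB.
  rewrite expr0 mul1r addn0 in ltB *.
  rewrite (bigD1 (Ordinal ltB)) //= jacobi_pow0 eqxx scale1r big1 ?addr0 // => i neq_in.
  rewrite jacobi_pow0; suff /negPf-> : n != i by rewrite scale0r.
  by apply: contra neq_in => /eqP eq_ni; apply/eqP/val_inj.
rewrite exprSr -mulrA recP mulrDr -scalerAr (IH n.+1) ?(IH n.-1); try lia.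
rewrite scaler_sumr -big_split /=; apply: eq_bigr => i _.
by rewrite scalerA -scalerDl.
Qed.

Lemma moment_jacobi_pow j a b :
  \int[mu]_(x in setT) (x ^+ j * (P a).[x] * (P b).[x] * w x) = jacobi_pow r j a b * h b.
Proof.
set B := (a + j + b).+1.
have ltaB : (a + j < B)%N by rewrite /B; lia.
have ltbB : (b < B)%N by rewrite /B; lia.
have intF m : mu.-integrable setT (EFin \o (fun x => (P m).[x] * (P b).[x] * w x)).
  exact: integrable_orth_integrand.
have orthF m : \int[mu]_(x in setT) ((P m).[x] * (P b).[x] * w x) = (m == b)%:R * h b.
  by rewrite /Rintegral orthP; case: eqP => [->|]; rewrite ?mul1r ?mul0r.
rewrite (@eq_Rintegral _ _ _ mu setT (fun x => \sum_(m < B)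
           jacobi_pow r j a m * ((P m).[x] * (P b).[x] * w x))); last first.
  move=> x _; rewrite -hornerXn -hornerM (@mulXn_P j a B ltaB) horner_sum.
  by rewrite !mulr_suml; apply: eq_bigr => i _; rewrite hornerZ !mulrA.
rewrite Rintegral_sum //; last first.
  move=> m; have -> : EFin \o (fun x => jacobi_pow r j a m * ((P m).[x] * (P b).[x] * w x))
      = fun x => ((jacobi_pow r j a m)%:E * ((P m).[x] * (P b).[x] * w x)%R%:E)%E.
    by apply/funext => x; rewrite /= EFinM.
  by apply: integrableZl => //; exact: intF.
rewrite (bigD1 (Ordinal ltbB)) //= RintegralZl // orthF eqxx mul1r.
rewrite big1 ?addr0 // => i neq_ib; rewrite RintegralZl // orthF.
suff /negPf-> : val i != b by rewrite mul0r mulr0.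
by apply: contra neq_ib => /eqP eq_ib; apply/eqP/val_inj.
Qed.

Lemma jacobi_pow_sym j a b : jacobi_pow r j a b * h b = jacobi_pow r j b a * h a.
Proof. by rewrite -!moment_jacobi_pow; apply: eq_Rintegral => x _; ring. Qed.

Lemma norm_succ m : h m.+1 = r m.+1 * h m.
Proof.
have := jacobi_pow_sym 1 m.+1 m; rewrite !jacobi_powS !jacobi_pow0 /=.
have -> : (m.+2 == m) = false by lia.
have -> : (m.-1 == m.+1) = false by lia.
by rewrite !eqxx mulr0 mulr1 add0r addr0 mul1r.
Qed.

Hypothesis h_gt0 : forall k, 0 < h k.

Lemma Lentry_jacobi_pow j m : Lentry p g N P h j m.+1 = jacobi_pow r j m.+1 m.
Proof. by rewrite /Lentry moment_jacobi_pow mulrC mulfK // lt0r_neq0. Qed.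

Lemma jacobi_pow_subdiag j m : jacobi_pow r j m.+1 m = r m.+1 * jacobi_pow r j m m.+1.
Proof.
apply: (mulIf (lt0r_neq0 (h_gt0 m))).
by rewrite jacobi_pow_sym norm_succ; ring.
Qed.

End Moments.

Section FormalPowerSeries.
Variable R : realType.
Implicit Types f g k : fps R.

(* multiplication by [lambda^-1] *)
Definition fps_shift f : fps R := fun i => if i is i'.+1 then f i' else 0.

Lemma fps_mulC f g : fps_mul f g = fps_mul g f.
Proof.
apply/funext => i; rewrite /fps_mul (reindex_inj rev_ord_inj) /=.
by apply: eq_bigr => j _; rewrite subKn 1?mulrC // -ltnS.
Qed.

Lemma fps_mulDl f g k : fps_mul (fps_add f g) k = fps_add (fps_mul f k) (fps_mul g k).
Proof.
by apply/funext => i; rewrite /fps_mul /fps_add -big_split; apply: eq_bigr => j _; rewrite mulrDl.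
Qed.

Lemma fps_mulBl f g k : fps_mul (fps_sub f g) k = fps_sub (fps_mul f k) (fps_mul g k).
Proof.
by apply/funext => i; rewrite /fps_mul /fps_sub -sumrB; apply: eq_bigr => j _; rewrite mulrBl.
Qed.

Lemma fps_mulZl c f g : fps_mul (fps_scale c f) g = fps_scale c (fps_mul f g).
Proof.
by apply/funext => i; rewrite /fps_mul /fps_scale mulr_sumr; apply: eq_bigr => j _; rewrite mulrA.
Qed.

Lemma fps_mul1l f : fps_mul (fps_one R) f = f.
Proof.
apply/funext => i; rewrite /fps_mul big_ord_recl /= subn0 mul1r big1 ?addr0 //.
by move=> j _; rewrite /fps_one mul0r.
Qed.

Lemma fps_mul_shiftl f g : fps_mul (fps_shift f) g = fps_shift (fps_mul f g).
Proof.
by apply/funext => -[|i]; rewrite /fps_mul big_ord_recl /= mul0r ?big_ord0 ?add0r.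
Qed.

Lemma fps_mulDr f g k : fps_mul k (fps_add f g) = fps_add (fps_mul k f) (fps_mul k g).
Proof. by rewrite fps_mulC fps_mulDl -!(fps_mulC k). Qed.

Lemma fps_mul1r f : fps_mul f (fps_one R) = f.
Proof. by rewrite fps_mulC fps_mul1l. Qed.

Lemma fps_mul_shiftr f g : fps_mul f (fps_shift g) = fps_shift (fps_mul f g).
Proof. by rewrite fps_mulC fps_mul_shiftl fps_mulC. Qed.

Lemma lamL_toL_shift f : lamL (toL (fps_shift f)) = toL f.
Proof.
apply/funext => i; rewrite /lamL /toL.
have [le_i0|gt_i0] := lerP i 0.
  have -> : (i - 1 <= 0) = true by lia.
  by have -> : `|i - 1|%N = (`|i|%N).+1 by lia.
have [->|ne_i1] := eqVneq i 1; first by rewrite subrr lexx.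
by have -> : (i - 1 <= 0) = false by lia.
Qed.

Section FirstIntegral.
Variables (r : nat -> R) (a d : nat -> fps R).
Hypothesis r0 : r 0%N = 0.
Hypothesis a0 : forall i, a 0%N i = 0.
Hypothesis d_def : forall n,
  d n = fps_add (fps_add (fps_one R) (fps_shift (a n))) (fps_shift (a n.+1)).
Hypothesis a_rec : forall n, fps_scale (r n.+1) (d n.+1) =
  fps_add (fps_sub (a n.+1) (a n)) (fps_scale (r n) (d n.-1)).

(* Telescoping [a_rec] against [d_def]; the cross terms cancel because
   [a_{n+1} (lambda^-1 a_n) = a_n (lambda^-1 a_{n+1})]. *)
Lemma first_integral n :
  fps_scale (r n) (fps_mul (d n) (d n.-1)) =
  fps_mul (a n) (fps_add (fps_one R) (fps_shift (a n))).
Proof.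
elim: n => [|n IH].
  apply/funext => i; rewrite /fps_scale r0 mul0r /fps_mul big1 // => j _.
  by rewrite a0 mul0r.
rewrite -fps_mulZl a_rec fps_mulDl fps_mulZl (fps_mulC (d n.-1)) IH [d n]d_def.
rewrite !fps_mulDr !fps_mul1r !fps_mul_shiftr !fps_mulBl (fps_mulC (a n) (a n.+1)).
by apply/funext => -[|i]; rewrite /fps_add /fps_sub /fps_shift /fps_one /=; ring.
Qed.

End FirstIntegral.

End FormalPowerSeries.

Section StringEquations.
Variables (R : realType) (p : nat) (g : nat -> R) (N : R).
Variables (P : nat -> {poly R}) (h r : nat -> R).
Notation U := (Useries p g N P h).

(* [subdiag_series m k = (L^{2k+1})_{m,m-1}] and [diag_series m k = (L^{2k})_{m,m}] *)
Definition subdiag_series (m : nat) : fps R :=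
  fun k => if m is m'.+1 then jacobi_pow r (2 * k).+1%N m m' else 0.
Definition diag_series (m : nat) : fps R := fun k => jacobi_pow r (2 * k)%N m m.

Hypothesis orthP : forall k l,
  (\int[@lebesgue_measure R]_(x in [set: R]) ((P k).[x] * (P l).[x] * weight p g N x)%:E)%E
  = (if k == l then h k else 0)%:E.
Hypothesis recP : forall n, 'X * P n = P n.+1 + r n *: P n.-1.
Hypothesis h_gt0 : forall k, 0 < h k.
Hypothesis r0 : r 0%N = 0.

Lemma Useries_subdiag m :
  U m = fps_add (fps_one R) (fps_scale 2 (fps_shift (subdiag_series m))).
Proof.
apply/funext => k; rewrite /Useries /fps_add /fps_scale /fps_shift /fps_one.
case: k => [|k]; first by case: m; rewrite /= ?mulr0 ?addr0.
rewrite (_ : (2 * k.+1)%R.-1 = (2 * k).+1)%N; last lia.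
case: m => [|m] /=; first by rewrite mulr0 addr0.
by rewrite add0r (Lentry_jacobi_pow orthP recP h_gt0).
Qed.

Lemma diag_series_subdiag m :
  diag_series m = fps_add (fps_add (fps_one R) (fps_shift (subdiag_series m)))
                          (fps_shift (subdiag_series m.+1)).
Proof.
apply/funext => k; rewrite /diag_series /subdiag_series /fps_add /fps_shift /fps_one.
case: k => [|k] /=; first by rewrite jacobi_pow0 eqxx !addr0.
rewrite (_ : (2 * k.+1 = (2 * k).+2)%N); last lia.
rewrite jacobi_powS add0r addrC; case: m => [|m] /=; first by rewrite r0 mul0r.
by rewrite (jacobi_pow_subdiag orthP recP h_gt0 _ m).
Qed.

Lemma subdiag_series_rec m :
  fps_scale (r m.+1) (diag_series m.+1) =
  fps_add (fps_sub (subdiag_series m.+1) (subdiag_series m))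
          (fps_scale (r m) (diag_series m.-1)).
Proof.
apply/funext => k; rewrite /fps_scale /fps_add /fps_sub /diag_series /subdiag_series.
rewrite jacobi_powSr //; case: m => [|m] /=; first by rewrite r0 mul0r add0r subr0 addr0.
by rewrite jacobi_powS; ring.
Qed.

Lemma Useries_add m : fps_add (U m.+1) (U m) = fps_scale 2 (diag_series m).
Proof.
rewrite !Useries_subdiag diag_series_subdiag; apply/funext => -[|k];
  by rewrite /fps_add /fps_scale /fps_shift /fps_one /=; ring.
Qed.

Lemma Useries_linear n : (1 <= n)%N ->
  lamL (toL (fps_sub (U n.+1) (U n)))
  = toL (fps_sub (fps_scale (r n.+1) (fps_add (U n.+2) (U n.+1)))
                 (fps_scale (r n) (fps_add (U n) (U n.-1)))).
Proof.
case: n => // n _; rewrite /= !Useries_add.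
have -> : fps_sub (U n.+2) (U n.+1) =
    fps_shift (fps_scale 2 (fps_sub (subdiag_series n.+2) (subdiag_series n.+1))).
  rewrite !Useries_subdiag; apply/funext => -[|k];
    by rewrite /fps_sub /fps_add /fps_scale /fps_shift /fps_one /=; ring.
rewrite lamL_toL_shift; congr toL; apply/funext => k.
have := congr1 (fun f => f k) (subdiag_series_rec n.+1).
by rewrite /fps_sub /fps_add /fps_scale /= => rec_k; rewrite !mulrA ![_ * 2]mulrC -!mulrA rec_k; ring.
Qed.

Lemma Useries_quadratic n : (1 <= n)%N ->
  toL (fps_scale (r n) (fps_mul (fps_add (U n) (U n.-1)) (fps_add (U n) (U n.+1))))
  = lamL (toL (fps_sub (fps_mul (U n) (U n)) (fps_one R))).
Proof.
case: n => // n _; rewrite /= Useries_add.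
have -> : fps_add (U n.+1) (U n.+2) = fps_scale 2 (diag_series n.+1).
  by rewrite -Useries_add; apply/funext => k; rewrite /fps_add addrC.
set a := subdiag_series n.+1.
have sqU : fps_sub (fps_mul (U n.+1) (U n.+1)) (fps_one R) =
    fps_shift (fps_scale 4 (fps_mul a (fps_add (fps_one R) (fps_shift a)))).
  rewrite Useries_subdiag -/a fps_mulDl fps_mul1l fps_mulZl fps_mulDr fps_mul1r.
  rewrite (fps_mulC _ (fps_scale _ _)) fps_mulZl fps_mul_shiftl fps_mulDr fps_mul1r.
  by apply/funext => -[|i]; rewrite /fps_sub /fps_add /fps_scale /fps_shift /fps_one /=; ring.
rewrite sqU lamL_toL_shift; congr toL.
have a0 i : subdiag_series 0 i = 0 by [].
rewrite fps_mulZl fps_mulC fps_mulZl.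
rewrite -(first_integral r0 a0 diag_series_subdiag subdiag_series_rec n.+1).
by apply/funext => i; rewrite /fps_scale; ring.
Qed.

End StringEquations.

Theorem theorem1 (R : realType) (p : nat) (g : nat -> R) (N : R)
  (P : nat -> {poly R}) (h : nat -> R) (r : nat -> R) :
  (1 <= p)%N ->
  0 < g (2 * p)%N ->
  0 < N ->
  (forall n, P n \is monic /\ size (P n) = n.+1) ->
  (forall k, 0 < h k) ->
  (forall k l,
     (\int[@lebesgue_measure R]_(x in [set: R])
        ((P k).[x] * (P l).[x] * weight p g N x)%:E)%E
     = (if k == l then h k else 0)%:E) ->
  r 0%N = 0 ->
  'X * P 0%N = P 1%N ->
  (forall n, 'X * P n.+1 = P n.+2 + r n.+1 *: P n) ->
  let U := Useries p g N P h in
  forall n, (1 <= n)%N ->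
    lamL (toL (fps_sub (U n.+1) (U n)))
      = toL (fps_sub (fps_scale (r n.+1) (fps_add (U n.+2) (U n.+1)))
                     (fps_scale (r n) (fps_add (U n) (U n.-1))))
    /\
    toL (fps_scale (r n) (fps_mul (fps_add (U n) (U n.-1)) (fps_add (U n) (U n.+1))))
      = lamL (toL (fps_sub (fps_mul (U n) (U n)) (fps_one R))).
Proof.
(* The growth conditions on Q and monicity only ensure that the moments exist,
   which the orthogonality hypothesis already provides. *)
move=> _ _ _ _ h_gt0 orthP r0 recP0 recPS U n n_ge1.
have recP n' : 'X * P n' = P n'.+1 + r n' *: P n'.-1.
  by case: n' => [|n']; [rewrite r0 scale0r addr0 | exact: recPS].
split; [exact: Useries_linear | exact: Useries_quadratic].
Qed.
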